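(* Let $\Bbbk$ be a field, $A$ a $\Bbbk$-algebra and $\Gamma$ a subalgebra of $A$, and let $\sim$ be an equivalence relation on $\mathrm{cfs}(\Gamma)$. Suppose $\Gamma$ is a Harish-Chandra block subalgebra of $A$ with respect to $\sim$. Then: (i) $\mathrm{HC}(A;\Gamma,\sim)=\bigoplus_{\mathcal{D}\in(\mathrm{cfs}(\Gamma)/{\sim})/\Delta}\mathrm{HC}(A;\Gamma,\sim;\mathcal{D})$; that is, every $V\in \mathrm{HC}(A;\Gamma,\sim)$ is the direct sum, as $A$-modules, of modules $V_{\mathcal D}\in \mathrm{HC}(A;\Gamma,\sim;\mathcal{D})$ (one for each $\Delta$-class $\mathcal D$), and there are no nonzero $A$-module maps between objects of $\mathrm{HC}(A;\Gamma,\sim;\mathcal{D})$ and $\mathrm{HC}(A;\Gamma,\sim;\mathcal{D}')$ for distinct $\Delta$-classes $\mathcal D\neq\mathcal D'$. (ii) $\mathrm{Irr}(A;\Gamma,\sim)=\bigsqcup_{\mathcal{D}\in(\mathrm{cfs}(\Gamma)/{\sim})/\nabla}\mathrm{Irr}(A;\Gamma,\sim;\mathcal{D})$.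
   Context: All algebras are associative unital $\Bbbk$-algebras. $\mathrm{cfs}(\Gamma)$ denotes the set of maximal two-sided ideals $\mathfrak m$ of $\Gamma$ with $\Gamma/\mathfrak m$ finite-dimensional. For an equivalence class $B\in\mathrm{cfs}(\Gamma)/{\sim}$ let $\mathcal W(B)=\{\mathfrak m_1\cdots\mathfrak m_k: k\ge 0,\ \mathfrak m_1,\dots,\mathfrak m_k\in B\}$ (products of ideals; the empty product is $\Gamma$). For a $\Gamma$-module $V$ the block space is $V(B)=\{v\in V:\mathfrak m v=0\text{ for some }\mathfrak m\in\mathcal W(B)\}$; the sum $\sum_B V(B)$ is always direct. $V$ is a block module if $V=\bigoplus_{B}V(B)$, and $\mathrm{Supp}(V)=\{B: V(B)\neq 0\}$. A Harish-Chandra block module is an $A$-module that is a block module as a $\Gamma$-module; $\mathrm{HC}(A;\Gamma,\sim)$ is the full subcategory of $A$-modules consisting of these. $\Gamma$ is a Harish-Chandra block subalgebra of $A$ (w.r.t. $\sim$) if the left $A$-module $A/A\mathfrak m$ is a Harish-Chandra block module for every $B$ and every $\mathfrak m\in\mathcal W(B)$. Let $\prec$ be the preorder on $\mathrm{cfs}(\Gamma)/{\sim}$ generated by the pairs $B\prec C$ whenever $C\in\mathrm{Supp}(A/A\mathfrak m)$ for some $\mathfrak m\in B$. Let $\Delta$ be the equivalence relation generated by $\prec$ and $\nabla$ the equivalence relation induced by $\prec$ ($B\,\nabla\, C$ iff $B\prec C$ and $C\prec B$). For $\mathcal D\subseteq \mathrm{cfs}(\Gamma)/{\sim}$, $\mathrm{HC}(A;\Gamma,\sim;\mathcal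 D)$ is the full subcategory of Harish-Chandra block modules $V$ with $\mathrm{Supp}(V)\subseteq\mathcal D$, and $\mathrm{Irr}(A;\Gamma,\sim;\mathcal D)$ is the set of isomorphism classes of simple objects of it; $\mathrm{Irr}(A;\Gamma,\sim)$ is the set of isomorphism classes of simple Harish-Chandra block modules. *)

From HB Require Import structures.
From mathcomp Require Import all_boot all_order all_algebra.
From Stdlib Require Import Relations.
From Stdlib Require List.
Set Implicit Arguments. Unset Strict Implicit. Unset Printing Implicit Defensive.
Import GRing.Theory.
Local Open Scope ring_scope.

(*  commutative).  The subalgebra Gamma is a predicate G on A with     *)
(*  subalg_closed G.  Subsets of A / of modules are predicates (-> Prop)*)
(*  A left A-module is an lmodType k  V  with an action  act.          *)

Definition iset (T : Type) := T -> Prop.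

Definition is_Amodule (k : fieldType) (A : algType k) (V : lmodType k)
  (act : A -> V -> V) : Prop :=
  [/\ (forall a (c : k) (u v : V), act a (c *: u + v) = c *: act a u + act a v),
      (forall (c : k) (a b : A) (v : V), act (c *: a + b) v = c *: act a v + act b v),
      (forall v, act 1 v = v)
    & (forall a b v, act (a * b) v = act a (act b v))].

Definition is_submodule (k : fieldType) (A : algType k) (V : lmodType k)
  (act : A -> V -> V) (W : iset V) : Prop :=
  [/\ W 0, (forall (c : k) u v, W u -> W v -> W (c *: u + v))
    & (forall a v, W v -> W (act a v))].

Definition is_Ahom (k : fieldType) (A : algType k) (V V' : lmodType k)
  (act : A -> V -> V) (act' : A -> V' -> V') (f : V -> V') : Prop :=
  (forall (c : k) u v, f (c *: u + v) = c *: f u + f v) /\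
  (forall a v, f (act a v) = act' a (f v)).

Definition is_idealG (k : fieldType) (A : algType k) (G : {pred A}) (m : iset A) : Prop :=
  [/\ (forall x, m x -> G x), m 0, (forall x y, m x -> m y -> m (x - y))
    & (forall g x, G g -> m x -> m (g * x) /\ m (x * g))].

Definition is_maximal_idealG (k : fieldType) (A : algType k) (G : {pred A}) (m : iset A) : Prop :=
  [/\ is_idealG G m, (exists g, G g /\ ~ m g)
    & (forall J : iset A, is_idealG G J -> (forall x, m x -> J x) ->
          (forall x, J x -> m x) \/ (forall x, G x -> J x))].

(* Gamma / m is finite-dimensional over k *)
Definition finite_codim (k : fieldType) (A : algType k) (G : {pred A}) (m : iset A) : Prop :=
  exists (n : nat) (e : 'I_n -> A), (forall i, G (e i)) /\
    forall g, G g -> exists c : 'I_n -> k, m (g - \sum_(i < n) c i *: e i).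

Definition cfs (k : fieldType) (A : algType k) (G : {pred A}) (m : iset A) : Prop :=
  is_maximal_idealG G m /\ finite_codim G m.

Definition equiv_on_cfs (k : fieldType) (A : algType k) (G : {pred A})
  (sim : iset A -> iset A -> Prop) : Prop :=
  [/\ (forall m, cfs G m -> sim m m),
      (forall m n, cfs G m -> cfs G n -> sim m n -> sim n m)
    & (forall m n p, cfs G m -> cfs G n -> cfs G p -> sim m n -> sim n p -> sim m p)].

Definition is_class (k : fieldType) (A : algType k) (G : {pred A})
  (sim : iset A -> iset A -> Prop) (B : iset (iset A)) : Prop :=
  exists m0, cfs G m0 /\ forall m, B m <-> (cfs G m /\ sim m m0).

Definition ideal_mul (k : fieldType) (A : algType k) (I J : iset A) : iset A :=
  fun z => exists s : seq (A * A),
    (forall p, p \in s -> I p.1 /\ J p.2) /\ z = \sum_(p <- s) p.1 * p.2.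

(* product m_1 ... m_k of a list of ideals; the empty product is Gamma *)
Definition ideal_prod (k : fieldType) (A : algType k) (G : {pred A})
  (l : list (iset A)) : iset A :=
  List.fold_right (@ideal_mul k A) (fun x => G x) l.

Definition left_ideal_gen (k : fieldType) (A : algType k) (m : iset A) : iset A :=
  ideal_mul (fun _ => True) m.

(* Block notions for the subquotient S / Z of an A-module V, where Z is
   the "zero" submodule: for a module V itself use Z = {0} and S = V;
   for a submodule W of V use S = W, Z = {0}; for a quotient V/U use
   S = V, Z = U.  An element v is in the block space (S/Z)(B) iff some
   m in W(B) satisfies m v = 0 in the quotient. *)
Definition in_block (k : fieldType) (A : algType k) (G : {pred A}) (V : lmodType k)
  (act : A -> V -> V) (Z : iset V) (B : iset (iset A)) (v : V) : Prop :=
  exists l : list (iset A), (forall m, List.In m l -> B m) /\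
    forall x, ideal_prod G l x -> Z (act x v).

(* S/Z is a block module: S/Z = sum_B (S/Z)(B) (the sum is always direct) *)
Definition is_block (k : fieldType) (A : algType k) (G : {pred A})
  (sim : iset A -> iset A -> Prop) (V : lmodType k) (act : A -> V -> V)
  (S Z : iset V) : Prop :=
  forall v, S v -> exists s : seq V,
    (forall w, w \in s -> S w /\ exists B, is_class G sim B /\ in_block G act Z B w) /\
    Z (v - \sum_(w <- s) w).

Definition in_supp (k : fieldType) (A : algType k) (G : {pred A}) (V : lmodType k)
  (act : A -> V -> V) (S Z : iset V) (B : iset (iset A)) : Prop :=
  exists v, [/\ S v, ~ Z v & in_block G act Z B v].

Definition zero_set (k : fieldType) (V : lmodType k) : iset V := fun v => v = 0.
Definition full_set (T : Type) : iset T := fun _ => True.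

Definition HC_sub_D (k : fieldType) (A : algType k) (G : {pred A})
  (sim : iset A -> iset A -> Prop) (V : lmodType k) (act : A -> V -> V)
  (D : iset (iset (iset A))) (W : iset V) : Prop :=
  is_block G sim act W (@zero_set k V) /\
  forall B, is_class G sim B -> in_supp G act W (@zero_set k V) B -> D B.

Definition HC_sub (k : fieldType) (A : algType k) (G : {pred A})
  (sim : iset A -> iset A -> Prop) (V : lmodType k) (act : A -> V -> V)
  (W : iset V) : Prop :=
  is_block G sim act W (@zero_set k V).

Definition HC (k : fieldType) (A : algType k) (G : {pred A})
  (sim : iset A -> iset A -> Prop) (V : lmodType k) (act : A -> V -> V) : Prop :=
  HC_sub G sim act (@full_set V).

Definition HC_D (k : fieldType) (A : algType k) (G : {pred A})
  (sim : iset A -> iset A -> Prop) (V : lmodType k) (act : A -> V -> V)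
  (D : iset (iset (iset A))) : Prop :=
  HC_sub_D G sim act D (@full_set V).

(* simple object of the full subcategory of A-modules given by P
   (subobjects = submodules lying in the subcategory) *)
Definition simple_in (k : fieldType) (A : algType k) (V : lmodType k)
  (act : A -> V -> V) (P : iset V -> Prop) : Prop :=
  [/\ P (@full_set V), (exists v : V, v <> 0)
    & forall W, is_submodule act W -> P W ->
        (forall v, W v -> v = 0) \/ (forall v, W v)].

(* Gamma is a Harish-Chandra block subalgebra: A / A m is a HC block module
   for all classes B and all m in W(B) *)
Definition HC_block_subalgebra (k : fieldType) (A : algType k) (G : {pred A})
  (sim : iset A -> iset A -> Prop) : Prop :=
  forall B, is_class G sim B -> forall l : list (iset A), (forall m, List.In m l -> B m) ->
    is_block G sim (fun a x : A => a * x) (@full_set A)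
      (left_ideal_gen (ideal_prod G l)).

Definition prec1 (k : fieldType) (A : algType k) (G : {pred A})
  (sim : iset A -> iset A -> Prop) (B C : iset (iset A)) : Prop :=
  [/\ is_class G sim B, is_class G sim C &
    exists m, B m /\ in_supp G (fun a x : A => a * x) (@full_set A) (left_ideal_gen m) C].

Definition prec (k : fieldType) (A : algType k) (G : {pred A})
  (sim : iset A -> iset A -> Prop) : relation (iset (iset A)) :=
  clos_refl_trans _ (prec1 G sim).

Definition Delta (k : fieldType) (A : algType k) (G : {pred A})
  (sim : iset A -> iset A -> Prop) : relation (iset (iset A)) :=
  clos_refl_sym_trans _ (prec G sim).

Definition Nabla (k : fieldType) (A : algType k) (G : {pred A})
  (sim : iset A -> iset A -> Prop) (B C : iset (iset A)) : Prop :=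
  prec G sim B C /\ prec G sim C B.

Definition is_R_class (k : fieldType) (A : algType k) (G : {pred A})
  (sim : iset A -> iset A -> Prop) (R : relation (iset (iset A)))
  (D : iset (iset (iset A))) : Prop :=
  exists B0, is_class G sim B0 /\ forall B, D B <-> (is_class G sim B /\ R B B0).

(* Distinct maximal ideals of Γ are comaximal, hence so are products of maximal ideals
   taken from two disjoint sets of blocks; a vector annihilated by products from both sets
   is therefore zero.  This makes sums of block spaces direct and lets one read off the
   blocks containing a vector.  The block hypothesis on A / A m, applied by induction on k
   to A / A m_1 ... m_k, shows that A V(B) lies in the sum of the V(C) with B ≼ C.  Hence
   for a Δ-class D the sum V_D of the block spaces of D is a submodule, V is the direct
   sum of the V_D, and A-module maps, which preserve blocks, vanish between different
   Δ-classes.  A simple Harish-Chandra module is generated by any nonzero block vector, so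
   any two blocks of its support are ≼-related both ways: the support lies in one ∇-class. *)

From HB Require Import structures.
From mathcomp Require Import all_boot all_order all_algebra.
From Stdlib Require Import Relations Classical FunctionalExtensionality PropExtensionality.
Import GRing.Theory.
Local Open Scope ring_scope.
Set Implicit Arguments. Unset Strict Implicit. Unset Printing Implicit Defensive.

Lemma sum_group_by_key (K : Type) (M : nmodType) (P : K -> M -> Prop) (s : seq M) :
  (forall key u v, P key u -> P key v -> P key (u + v)) ->
  (forall w, w \in s -> exists key, P key w) ->
  exists n (keys : 'I_n -> K) (ws : 'I_n -> M),
    [/\ injective keys, forall i, P (keys i) (ws i) & \sum_(w <- s) w = \sum_(i < n) ws i].
Proof.
move=> PD; elim: s => [|w s IH] hs.
  have keys : 'I_0 -> K by case.
  by exists 0, keys, (fun _ => 0); split=> [[]|[]|] //; rewrite big_nil big_ord0.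
have [key hw] := hs w (mem_head _ _).
rewrite big_cons.
have [|n [keys [ws [inj hP ->]]]] := IH; first by move=> u hu; apply: hs; rewrite in_cons hu orbT.
case: (classic (exists i, keys i = key)) => [[i ei]|new].
  exists n, keys, (fun j => ws j + (if j == i then w else 0)); split=> //.
  - move=> j; case: (j =P i) => [->|_]; last by rewrite addr0.
    by apply: PD => //; rewrite ei.
  - by rewrite big_split /= -big_mkcond big_pred1_eq addrC.
exists n.+1, (fun j => oapp keys key (unlift ord0 j)), (fun j => oapp ws w (unlift ord0 j)).
split.
- move=> i j; case: (unliftP ord0 i) => [i'|] ->; case: (unliftP ord0 j) => [j'|] -> //=.
  + by move/inj ->.
  + by move=> e; case: new; exists i'.
  + by move=> e; case: new; exists j'.
- by move=> j; case: (unliftP ord0 j) => [j'|] _ /=; [apply: hP | apply: hw].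
- by rewrite big_ord_recl /= unlift_none; congr (_ + _); apply: eq_bigr => j _; rewrite liftK.
Qed.

Section HarishChandraBlocks.
Variables (k : fieldType) (A : algType k) (G : {pred A}).
Hypothesis HG : GRing.subalg_closed G.
HB.instance Definition _ := GRing.isSubalgClosed.Build k A G HG.

Implicit Types (I J K m : iset A) (l : list (iset A)).

(** * Products of ideals and comaximality *)

Lemma ideal_mul_ind I J (P : A -> Prop) :
  P 0 -> (forall x y, P x -> P y -> P (x + y)) -> (forall a b, I a -> J b -> P (a * b)) ->
  forall x, ideal_mul I J x -> P x.
Proof.
move=> P0 PD Pab _ [s [hs ->]]; rewrite big_seq; apply: (big_ind P) => // p /hs [].
exact: Pab.
Qed.

Lemma ideal_mul0 I J : ideal_mul I J 0.
Proof. by exists [::]; rewrite big_nil. Qed.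

Lemma ideal_mulD I J x y : ideal_mul I J x -> ideal_mul I J y -> ideal_mul I J (x + y).
Proof.
move=> [s [hs ->]] [t [ht ->]]; exists (s ++ t); rewrite big_cat; split=> // p.
by rewrite mem_cat => /orP [/hs | /ht].
Qed.

Lemma ideal_mul_gen I J a b : I a -> J b -> ideal_mul I J (a * b).
Proof.
by move=> ha hb; exists [:: (a, b)]; rewrite big_seq1; split=> // p; rewrite inE => /eqP ->.
Qed.

Lemma ideal_mulS I I' J J' x : (forall y, I y -> I' y) -> (forall y, J y -> J' y) ->
  ideal_mul I J x -> ideal_mul I' J' x.
Proof.
move=> hI hJ; move: x; apply: ideal_mul_ind => [|x y|a b /hI ha /hJ hb].
- exact: ideal_mul0.
- exact: ideal_mulD.
- exact: ideal_mul_gen.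
Qed.

Lemma ideal_mulN I J x : (forall a, I a -> I (- a)) -> ideal_mul I J x -> ideal_mul I J (- x).
Proof.
move=> hI; move: x; apply: ideal_mul_ind => [|x y hx hy|a b ha hb].
- by rewrite oppr0; apply: ideal_mul0.
- by rewrite opprD; apply: ideal_mulD.
- by rewrite -mulNr; apply: ideal_mul_gen => //; apply: hI.
Qed.

Lemma ideal_mulMl I J g x : (forall a, I a -> I (g * a)) ->
  ideal_mul I J x -> ideal_mul I J (g * x).
Proof.
move=> hI; move: x; apply: ideal_mul_ind => [|x y hx hy|a b ha hb].
- by rewrite mulr0; apply: ideal_mul0.
- by rewrite mulrDr; apply: ideal_mulD.
- by rewrite mulrA; apply: ideal_mul_gen => //; apply: hI.
Qed.

Lemma ideal_mulMr I J g x : (forall b, J b -> J (b * g)) ->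
  ideal_mul I J x -> ideal_mul I J (x * g).
Proof.
move=> hJ; move: x; apply: ideal_mul_ind => [|x y hx hy|a b ha hb].
- by rewrite mul0r; apply: ideal_mul0.
- by rewrite mulrDl; apply: ideal_mulD.
- by rewrite -mulrA; apply: ideal_mul_gen => //; apply: hJ.
Qed.

Section Ideal.
Variable I : iset A.
Hypothesis hI : is_idealG G I.

Lemma ideal_subG x : I x -> G x.
Proof. by case: hI => h _ _ _; apply: h. Qed.

Lemma ideal0 : I 0.
Proof. by case: hI. Qed.

Lemma idealB x y : I x -> I y -> I (x - y).
Proof. by case: hI => _ _ h _; apply: h. Qed.

Lemma idealN x : I x -> I (- x).
Proof. by move=> hx; rewrite -sub0r; apply: idealB => //; apply: ideal0. Qed.

Lemma idealD x y : I x -> I y -> I (x + y).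
Proof. by move=> hx hy; rewrite -[y]opprK; apply: idealB => //; apply: idealN. Qed.

Lemma idealMl g x : G g -> I x -> I (g * x).
Proof. by case: hI => _ _ _ h hg hx; case: (h g x hg hx). Qed.

Lemma idealMr g x : G g -> I x -> I (x * g).
Proof. by case: hI => _ _ _ h hg hx; case: (h g x hg hx). Qed.

End Ideal.

Lemma G_ideal : is_idealG G (fun x => G x).
Proof.
split=> // [|x y hx hy|g x hg hx]; first exact: rpred0.
  exact: rpredB.
by split; apply: rpredM.
Qed.

Lemma ideal_mul_ideal I J : is_idealG G I -> is_idealG G J -> is_idealG G (ideal_mul I J).
Proof.
move=> hI hJ; split.
- apply: ideal_mul_ind => [|x y|a b ha hb]; [exact: rpred0 | exact: rpredD |].
  by apply: rpredM; [apply: ideal_subG ha | apply: ideal_subG hb].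
- exact: ideal_mul0.
- by move=> x y hx hy; apply: ideal_mulD hx _; apply: ideal_mulN hy => a; apply: idealN.
- move=> g x hg hx; split.
    by apply: ideal_mulMl hx => a; apply: idealMl.
  by apply: ideal_mulMr hx => b; apply: idealMr.
Qed.

Lemma ideal_prod_ideal l : (forall m, List.In m l -> is_idealG G m) ->
  is_idealG G (ideal_prod G l).
Proof.
elim: l => [|m l IH] hl /=; first exact: G_ideal.
by apply: ideal_mul_ideal; [apply: hl; left | apply: IH => m' hm'; apply: hl; right].
Qed.

Lemma ideal_prod1 m : is_idealG G m -> ideal_prod G [:: m] = m.
Proof.
move=> hm; apply: functional_extensionality => x; apply: propositional_extensionality.
split; last by move=> hx; rewrite -[x]mulr1; apply: ideal_mul_gen => //; apply: rpred1.
move: x; apply: ideal_mul_ind => [|x y|a b ha hb].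
- exact: ideal0.
- exact: idealD.
- exact: idealMr.
Qed.

Lemma ideal_prod_catl l1 l2 x : (forall m, List.In m l2 -> is_idealG G m) ->
  ideal_prod G (l1 ++ l2) x -> ideal_prod G l1 x.
Proof.
move=> hl2; elim: l1 x => [|m l1 IH] x /=; first exact: ideal_subG (ideal_prod_ideal hl2) x.
exact: ideal_mulS.
Qed.

Lemma left_ideal_gen_id J x : J x -> left_ideal_gen J x.
Proof. by move=> hx; rewrite -[x]mul1r; apply: ideal_mul_gen. Qed.

Lemma left_ideal_gen_G a : left_ideal_gen (fun x => G x) a.
Proof. by rewrite -[a]mulr1; apply: ideal_mul_gen => //; apply: rpred1. Qed.

Lemma left_ideal_genMl J a x : left_ideal_gen J x -> left_ideal_gen J (a * x).
Proof. exact: ideal_mulMl. Qed.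

Lemma left_ideal_genS J J' x : (forall y, J y -> left_ideal_gen J' y) ->
  left_ideal_gen J x -> left_ideal_gen J' x.
Proof.
move=> hJ; move: x; apply: ideal_mul_ind => [|x y|a b _ /hJ hb].
- exact: ideal_mul0.
- exact: ideal_mulD.
- exact: left_ideal_genMl.
Qed.

Lemma left_ideal_gen_mulr I J z y : left_ideal_gen I z -> J y ->
  left_ideal_gen (ideal_mul I J) (z * y).
Proof.
move=> + hy; move: z; apply: ideal_mul_ind => [|x z|a b _ hb].
- by rewrite mul0r; apply: ideal_mul0.
- by rewrite mulrDl; apply: ideal_mulD.
- by rewrite -mulrA; do 2![apply: ideal_mul_gen => //].
Qed.

Lemma ideal_prod_catr l1 l2 x :
  ideal_prod G (l1 ++ l2) x -> left_ideal_gen (ideal_prod G l2) x.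
Proof.
elim: l1 x => [|m l1 IH] x /=; first exact: left_ideal_gen_id.
move: x; apply: ideal_mul_ind => [|x y|a b _ /IH hb].
- exact: ideal_mul0.
- exact: ideal_mulD.
- exact: left_ideal_genMl.
Qed.

Definition comaximal I J := exists a b, [/\ I a, J b & a + b = 1].

Lemma comaximal_mulr I J K : is_idealG G I -> (forall x, J x -> G x) ->
  comaximal I J -> comaximal I K -> comaximal I (ideal_mul J K).
Proof.
move=> hI hJ [a1 [b1 [ha1 hb1 e1]]] [a2 [c2 [ha2 hc2 e2]]].
exists (a1 + b1 * a2), (b1 * c2); split; last by rewrite -addrA -mulrDr e2 mulr1.
  by apply: idealD => //; apply: idealMl => //; apply: hJ.
exact: ideal_mul_gen.
Qed.

Lemma comaximal_mull I J K : (forall x, I x -> G x) -> is_idealG G K ->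
  comaximal I K -> comaximal J K -> comaximal (ideal_mul I J) K.
Proof.
move=> hI hK [a [c [ha hc e1]]] [b [d [hb hd e2]]].
exists (a * b), (a * d + c); split; last by rewrite addrA -mulrDr e2 mulr1.
  exact: ideal_mul_gen.
by apply: idealD => //; apply: idealMl => //; apply: hI.
Qed.

Lemma comaximal_prodr I l : is_idealG G I ->
  (forall m, List.In m l -> is_idealG G m /\ comaximal I m) -> comaximal I (ideal_prod G l).
Proof.
move=> hI; elim: l => [|m l IH] hl /=.
  by exists 0, 1; rewrite add0r; split=> //; [exact: ideal0 | exact: rpred1].
have [hm cm] := hl m (or_introl erefl).
apply: comaximal_mulr => //; first exact: ideal_subG hm.
by apply: IH => m' hm'; apply: hl; right.
Qed.

Lemma comaximal_prod l1 l2 : (forall m, List.In m l1 -> is_idealG G m) ->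
  (forall m, List.In m l2 -> is_idealG G m) ->
  (forall m m', List.In m l1 -> List.In m' l2 -> comaximal m m') ->
  comaximal (ideal_prod G l1) (ideal_prod G l2).
Proof.
move=> + hl2; have I2 := ideal_prod_ideal hl2.
elim: l1 => [|m l1 IH] hl1 hc /=.
  by exists 1, 0; rewrite addr0; split=> //; [exact: rpred1 | exact: ideal0].
apply: comaximal_mull => //; first exact: ideal_subG (hl1 m (or_introl erefl)).
  apply: comaximal_prodr; first by apply: hl1; left.
  by move=> m' hm'; split; [exact: hl2 | apply: hc => //; left].
apply: IH => [m' hm'|m' m'' hm' hm'']; first by apply: hl1; right.
by apply: hc => //; right.
Qed.

Lemma maximal_comaximal m m' : is_maximal_idealG G m -> is_maximal_idealG G m' -> m <> m' ->
  comaximal m m'.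
Proof.
move=> [hm [g [hg hng]] maxm] [hm' _ maxm'] neq.
pose J x := exists a b, [/\ m a, m' b & x = a + b].
have hJ : is_idealG G J.
  split.
  - by move=> _ [a [b [ha hb ->]]]; apply: rpredD; [apply: ideal_subG ha | apply: ideal_subG hb].
  - by exists 0, 0; rewrite addr0; split=> //; apply: ideal0.
  - move=> _ _ [a [b [ha hb ->]]] [a' [b' [ha' hb' ->]]].
    by exists (a - a'), (b - b'); rewrite opprD addrACA; split=> //; apply: idealB.
  - move=> x _ hx [a [b [ha hb ->]]]; split.
      by exists (x * a), (x * b); rewrite mulrDr; split=> //; apply: idealMl.
    by exists (a * x), (b * x); rewrite mulrDl; split=> //; apply: idealMr.
have mJ x : m x -> J x by move=> hx; exists x, 0; rewrite addr0; split=> //; apply: ideal0.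
case: (maxm J hJ mJ) => [Jm|GJ]; last first.
  by have [a [b [ha hb e]]] := GJ 1 (rpred1 _); exists a, b; split; rewrite -?e.
have m'm x : m' x -> m x.
  by move=> hx; apply: Jm; exists 0, x; rewrite add0r; split=> //; apply: ideal0.
case: (maxm' m hm m'm) => [mm'|Gm]; last by case: hng; apply: Gm.
case: neq; apply: functional_extensionality => x; apply: propositional_extensionality.
by split; [apply: mm' | apply: m'm].
Qed.

(** * Blocks and their equivalence classes *)

Variable sim : iset A -> iset A -> Prop.
Hypothesis Hsim : equiv_on_cfs G sim.
Local Notation cls := (is_class G sim).

Lemma class_maximal B m : cls B -> B m -> is_maximal_idealG G m.
Proof. by move=> [m0 [_ hB]] /hB [[]]. Qed.

Lemma class_ideal B m : cls B -> B m -> is_idealG G m.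
Proof. by move=> hB /(class_maximal hB) []. Qed.

Lemma class_eq B C m : cls B -> cls C -> B m -> C m -> B = C.
Proof.
have [_ Hs Ht] := Hsim.
move=> [b0 [hb0 hB]] [c0 [hc0 hC]] /hB [hm smb] /hC [_ smc].
apply: functional_extensionality => x; apply: propositional_extensionality.
rewrite hB hC; split=> -[hx sx]; split=> //.
  exact: Ht hx hm hc0 (Ht _ _ _ hx hb0 hm sx (Hs _ _ hm hb0 smb)) smc.
exact: Ht hx hm hb0 (Ht _ _ _ hx hc0 hm sx (Hs _ _ hm hc0 smc)) smb.
Qed.

Section RClasses.
Variable R : relation (iset (iset A)).
Hypotheses (Rsym : symmetric _ R) (Rtrans : transitive _ R).

Lemma R_class_closed D B C : is_R_class G sim R D -> D B -> cls C -> R B C -> D C.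
Proof.
move=> [B0 [_ hD]] /hD [_ hBB0] hC hBC; apply/hD; split=> //.
exact: (Rtrans (Rsym hBC) hBB0).
Qed.

Lemma R_class_rel D B C : is_R_class G sim R D -> D B -> D C -> cls C /\ R B C.
Proof.
move=> [B0 [_ hD]] /hD [_ hBB0] /hD [hC hCB0]; split=> //.
exact: (Rtrans hBB0 (Rsym hCB0)).
Qed.

Lemma R_class_eq D D' B : is_R_class G sim R D -> is_R_class G sim R D' -> D B -> D' B -> D = D'.
Proof.
move=> hD hD' hDB hD'B; apply: functional_extensionality => C; apply: propositional_extensionality.
split=> [/(R_class_rel hD hDB) [hC hBC] | /(R_class_rel hD' hD'B) [hC hBC]].
  exact: R_class_closed hD' hD'B hC hBC.
exact: R_class_closed hD hDB hC hBC.
Qed.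

End RClasses.

Definition class_of (R : relation (iset (iset A))) B : iset (iset (iset A)) :=
  fun C => cls C /\ R C B.

Lemma class_of_R_class R B : cls B -> is_R_class G sim R (class_of R B).
Proof. by move=> hB; exists B. Qed.

Lemma Delta_refl : reflexive _ (Delta G sim).
Proof. exact: rst_refl. Qed.

Lemma Delta_sym : symmetric _ (Delta G sim).
Proof. exact: rst_sym. Qed.

Lemma Delta_trans : transitive _ (Delta G sim).
Proof. exact: rst_trans. Qed.

Lemma Nabla_sym : symmetric _ (Nabla G sim).
Proof. by move=> B C []. Qed.

Lemma Nabla_trans : transitive _ (Nabla G sim).
Proof. by move=> B C D [h1 h2] [h3 h4]; split; [apply: rt_trans h1 h3 | apply: rt_trans h4 h2]. Qed.

Lemma Delta_class_prec_closed D B C : is_R_class G sim (Delta G sim) D -> D B -> cls C ->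
  prec G sim B C -> D C.
Proof.
move=> hD hDB hC hBC; apply: (R_class_closed Delta_sym Delta_trans hD hDB hC).
exact: rst_step.
Qed.

Lemma Delta_class_eq D D' B : is_R_class G sim (Delta G sim) D ->
  is_R_class G sim (Delta G sim) D' -> D B -> D' B -> D = D'.
Proof. exact: (R_class_eq Delta_sym Delta_trans). Qed.

(** * Torsion with respect to a set of blocks *)

Definition block_ideals (R : iset (iset (iset A))) l :=
  forall m, List.In m l -> exists2 C, cls C /\ R C & C m.

Lemma block_ideals_ideal R l m : block_ideals R l -> List.In m l -> is_idealG G m.
Proof. by move=> hl /hl [C [hC _]]; apply: class_ideal. Qed.

Lemma block_ideals_comaximal R1 R2 l1 l2 : (forall C, cls C -> R1 C -> R2 C -> False) ->
  block_ideals R1 l1 -> block_ideals R2 l2 -> comaximal (ideal_prod G l1) (ideal_prod G l2).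
Proof.
move=> dis hl1 hl2.
apply: comaximal_prod => [m|m|m m' /hl1 [C [hC r1] hm] /hl2 [C' [hC' r2] hm']].
- exact: block_ideals_ideal hl1.
- exact: block_ideals_ideal hl2.
apply: maximal_comaximal; [exact: class_maximal hm | exact: class_maximal hm' | move=> em].
by rewrite em in hm; rewrite (class_eq hC hC' hm hm') in r1; apply: dis hC' r1 r2.
Qed.

Section Module.
Variables (V : lmodType k) (act : A -> V -> V).
Hypothesis Hact : is_Amodule act.

Lemma act_is_linear a : linear (act a).
Proof. by case: Hact => h _ _ _ c u v; rewrite h. Qed.
HB.instance Definition _ a := GRing.isLinear.Build k V V _ (act a) (act_is_linear a).

Lemma act1 v : act 1 v = v.
Proof. by case: Hact. Qed.

Lemma actM a b v : act (a * b) v = act a (act b v).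
Proof. by case: Hact. Qed.

Lemma actDl a b v : act (a + b) v = act a v + act b v.
Proof. by case: Hact => _ h _ _; have := h 1 a b v; rewrite !scale1r. Qed.

Lemma act0l v : act 0 v = 0.
Proof. by apply: (addrI (act 0 v)); rewrite -actDl !addr0. Qed.

Lemma actBl a b v : act (a - b) v = act a v - act b v.
Proof. by apply: (addIr (act b v)); rewrite -actDl !subrK. Qed.

Lemma act_suml (T : Type) (s : seq T) (F : T -> A) v :
  act (\sum_(t <- s) F t) v = \sum_(t <- s) act (F t) v.
Proof. by elim: s => [|t s IH]; rewrite ?big_nil ?act0l // !big_cons actDl IH. Qed.

Lemma zero_submodule : is_submodule act (@zero_set k V).
Proof. by split=> // [c u v -> ->|a v ->]; rewrite ?scaler0 ?addr0 ?linear0. Qed.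

Lemma in_blockS Z Z' C v : (forall x, Z x -> Z' x) ->
  in_block G act Z C v -> in_block G act Z' C v.
Proof. by move=> hZ [l [hl kl]]; exists l; split=> // x /kl /hZ. Qed.

Section Submodule.
Variable Z : iset V.
Hypothesis HZ : is_submodule act Z.

Lemma submodule0 : Z 0.
Proof. by case: HZ. Qed.

Lemma submoduleD u v : Z u -> Z v -> Z (u + v).
Proof. by case: HZ => _ h _ hu hv; rewrite -[u]scale1r; apply: h. Qed.

Lemma submodule_act a v : Z v -> Z (act a v).
Proof. by case: HZ => _ _; apply. Qed.

(* [v + Z] lies in the sum of the block spaces [(V/Z)(C)], [C] in [R]. *)
Definition torsion (R : iset (iset (iset A))) (v : V) :=
  exists l, block_ideals R l /\ forall x, ideal_prod G l x -> Z (act x v).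

Lemma left_ideal_gen_annihilates J v x : (forall y, J y -> Z (act y v)) ->
  left_ideal_gen J x -> Z (act x v).
Proof.
move=> hJ; move: x; apply: ideal_mul_ind => [|x y hx hy|a b _ hb].
- by rewrite act0l; apply: submodule0.
- by rewrite actDl; apply: submoduleD.
- by rewrite actM; apply: submodule_act; apply: hJ.
Qed.

Lemma torsion_submodule R v : Z v -> torsion R v.
Proof. by move=> hv; exists [::]; split=> // x _; apply: submodule_act. Qed.

Lemma in_block_torsion R C v : cls C -> R C -> in_block G act Z C v -> torsion R v.
Proof. by move=> hC hR [l [hl kl]]; exists l; split=> // m /hl; exists C. Qed.

Lemma torsionD R u v : torsion R u -> torsion R v -> torsion R (u + v).
Proof.
move=> [l1 [hl1 k1]] [l2 [hl2 k2]]; exists (l1 ++ l2); split.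
  by move=> m hm; case: (List.in_app_or _ _ _ hm) => [/hl1|/hl2].
move=> x hx; rewrite linearD; apply: submoduleD.
  exact: k1 (ideal_prod_catl (fun m => block_ideals_ideal hl2) hx).
exact: left_ideal_gen_annihilates k2 (ideal_prod_catr hx).
Qed.

Lemma torsion_sum R (T : eqType) (s : seq T) (F : T -> V) :
  (forall t, t \in s -> torsion R (F t)) -> torsion R (\sum_(t <- s) F t).
Proof.
move=> hs; rewrite big_seq; apply: big_ind hs; last exact: torsionD.
exact: torsion_submodule submodule0.
Qed.

Lemma torsion_eqmod R u v : Z (u - v) -> torsion R v -> torsion R u.
Proof. by move=> huv hv; rewrite -(subrK v u); apply: torsionD => //; apply: torsion_submodule. Qed.

Lemma torsion_disjoint R1 R2 v : (forall C, cls C -> R1 C -> R2 C -> False) ->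
  torsion R1 v -> torsion R2 v -> Z v.
Proof.
move=> dis [l1 [hl1 k1]] [l2 [hl2 k2]].
have [x [y [hx hy e]]] := block_ideals_comaximal dis hl1 hl2.
by rewrite -[v]act1 -e actDl; apply: submoduleD; [apply: k1 | apply: k2].
Qed.

Lemma in_block_torsion_class R C v : cls C -> in_block G act Z C v -> ~ Z v ->
  torsion R v -> R C.
Proof.
move=> hC hCv hv hRv; apply: NNPP => hRC; apply: hv.
apply: (torsion_disjoint (R1 := eq C)) hRv; first by move=> C' _ <-.
exact: in_block_torsion hCv.
Qed.

End Submodule.
End Module.

(** * The left regular module *)

Hypothesis HCb : HC_block_subalgebra G sim.

Local Notation mulA := (fun a x : A => a * x).

Lemma regular_Amodule : is_Amodule mulA.
Proof.
split=> [a c u v|c a b v|v|a b v]; rewrite ?mul1r ?mulrA //.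
  by rewrite mulrDr scalerAr.
by rewrite mulrDl scalerAl.
Qed.

Lemma left_ideal_gen_submodule J : is_submodule mulA (left_ideal_gen J).
Proof.
split=> [|c u v hu hv|a v]; first exact: ideal_mul0.
  by apply: ideal_mulD => //; rewrite -[u]mul1r scalerAl; apply: left_ideal_genMl.
exact: left_ideal_genMl.
Qed.

(* Decompose [b] in the block module [A / A m], then multiply on the right by [y]. *)
Lemma regular_quotient_torsion B m l b y : cls B -> B m -> ideal_prod G l y ->
  torsion mulA (left_ideal_gen (ideal_prod G (m :: l))) (prec G sim B) (b * y).
Proof.
move=> hB hBm hy; have hm := class_ideal hB hBm.
set Z := left_ideal_gen _.
have HZ : is_submodule mulA Z := left_ideal_gen_submodule _.
have Zmul z : left_ideal_gen m z -> Z (z * y) by move=> hz; apply: left_ideal_gen_mulr hz hy.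
have [|t [ht zt]] := @HCb B hB [:: m] _ b I; first by move=> m' [<-|[]].
rewrite ideal_prod1 // in ht zt.
apply: (torsion_eqmod regular_Amodule HZ (v := \sum_(w <- t) w * y)).
  by rewrite -mulr_suml -mulrBl; apply: Zmul.
apply: (torsion_sum regular_Amodule HZ) => w /ht [_ [C [hC [lw [hlw kw]]]]].
have hCw : in_block G mulA (left_ideal_gen m) C w by exists lw.
case: (classic (Z (w * y))) => [hz|hnz]; first exact: torsion_submodule HZ _ _ hz.
apply: (in_block_torsion (C := C)) => //.
  apply: rt_step; split=> //; exists m; split=> //; exists w; split=> //.
  by move=> /Zmul.
by exists lw; split=> // x /kw hx; rewrite /= mulrA; apply: Zmul.
Qed.

Lemma regular_quotient_block_prec B l C a : cls B -> (forall m, List.In m l -> B m) -> cls C ->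
  in_block G mulA (left_ideal_gen (ideal_prod G l)) C a ->
  ~ left_ideal_gen (ideal_prod G l) a -> prec G sim B C.
Proof.
move=> hB; elim: l => [|m l IH] hl hC hCa hna; first by case: hna; apply: left_ideal_gen_G.
have hBm : B m := hl m (or_introl erefl).
have hl' m' : List.In m' l -> B m' by move=> hm'; apply: hl; right.
case: (classic (left_ideal_gen (ideal_prod G l) a)) => [haP|haP]; last first.
  apply: IH hl' hC _ haP; apply: in_blockS hCa.
  by move=> x; apply: left_ideal_genS => y; apply: (@ideal_prod_catr [:: m]).
have HZ := left_ideal_gen_submodule (ideal_prod G (m :: l)).
apply: (in_block_torsion_class regular_Amodule HZ) hC hCa hna _.
clear IH; move: a haP; apply: ideal_mul_ind => [|x y|b y _ hy].
- exact: torsion_submodule HZ _ _ (ideal_mul0 _ _).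
- by move=> hx hy; apply: (torsionD regular_Amodule HZ hx hy).
- exact: regular_quotient_torsion.
Qed.

(** * Block decomposition *)

Section Blocks.
Variables (V : lmodType k) (act : A -> V -> V).
Hypothesis Hact : is_Amodule act.
HB.instance Definition _ a := GRing.isLinear.Build k V V _ (act a) (act_is_linear Hact a).
Local Notation zero := (@zero_set k V).
Local Notation HZ := (zero_submodule Hact).

Lemma in_block_zero B : in_block G act zero B 0.
Proof. by exists [::]; split=> // x _; rewrite /zero_set linear0. Qed.

Lemma act_block_decomposition B v a : cls B -> in_block G act zero B v ->
  exists ts : seq A, act a v = \sum_(t <- ts) act t v /\
    forall t, t \in ts -> exists2 C, cls C /\ prec G sim B C & in_block G act zero C (act t v).
Proof.
move=> hB [l [hl kl]].
have killv x : left_ideal_gen (ideal_prod G l) x -> act x v = 0.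
  exact: (left_ideal_gen_annihilates Hact HZ kl).
have [ts [hts zts]] := @HCb B hB l hl a I.
exists ts; split.
  by apply/eqP; rewrite -subr_eq0 -(act_suml Hact) -(actBl Hact); apply/eqP; apply: killv.
move=> t /hts [_ [C [hC [lt [hlt kt]]]]].
case: (classic (act t v = 0)) => [->|hnz].
  by exists B; [split=> //; apply: rt_refl | apply: in_block_zero].
exists C; first split=> //.
  apply: (regular_quotient_block_prec hB hl hC (a := t)); first by exists lt.
  by move=> /killv.
by exists lt; split=> // x /kt hx; rewrite /zero_set -(actM Hact); apply: killv.
Qed.

Lemma act_block_torsion B v a : cls B -> in_block G act zero B v ->
  torsion act zero (prec G sim B) (act a v).
Proof.
move=> hB hBv; have [ts [-> hts]] := act_block_decomposition a hB hBv.
by apply: (torsion_sum Hact HZ) => t /hts [C [hC hBC] hCt]; apply: in_block_torsion hCt.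
Qed.

Definition block_sum (R : iset (iset (iset A))) (v : V) :=
  exists s : seq V, (forall w, w \in s -> exists2 B, cls B /\ R B & in_block G act zero B w) /\
    v = \sum_(w <- s) w.

Lemma block_sum0 R : block_sum R 0.
Proof. by exists [::]; rewrite big_nil. Qed.

Lemma block_sumD R u v : block_sum R u -> block_sum R v -> block_sum R (u + v).
Proof.
move=> [s [hs ->]] [t [ht ->]]; exists (s ++ t); rewrite big_cat; split=> // w.
by rewrite mem_cat => /orP [/hs|/ht].
Qed.

Lemma block_sumZ R c v : block_sum R v -> block_sum R (c *: v).
Proof.
move=> [s [hs ->]]; exists [seq c *: w | w <- s]; rewrite big_map scaler_sumr.
split=> // _ /mapP [w /hs [B hB [l [hl kl]]] ->]; exists B => //.
by exists l; split=> // x /kl; rewrite /zero_set linearZZ /= => ->; rewrite scaler0.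
Qed.

Lemma block_sumS R R' v : (forall C, R C -> R' C) -> block_sum R v -> block_sum R' v.
Proof.
move=> hR [s [hs ->]]; exists s; split=> // w /hs [B [hB /hR hR'] hw].
by exists B.
Qed.

Lemma block_sum_block R B w : cls B -> R B -> in_block G act zero B w -> block_sum R w.
Proof.
move=> hB hR hw; exists [:: w]; rewrite big_seq1; split=> // u.
by rewrite inE => /eqP ->; exists B.
Qed.

Lemma block_sum_torsion R v : block_sum R v -> torsion act zero R v.
Proof.
move=> [s [hs ->]]; apply: (torsion_sum Hact HZ) => w /hs [B [hB hR] hw].
exact: in_block_torsion hw.
Qed.

Lemma block_sum_submodule R : (forall B C, R B -> cls C -> prec G sim B C -> R C) ->
  is_submodule act (block_sum R).
Proof.
move=> Rup; split=> [|c u v hu hv|a _ [s [hs ->]]]; first exact: block_sum0.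
  by apply: block_sumD => //; apply: block_sumZ.
rewrite raddf_sum /= big_seq.
apply: (big_ind (block_sum R)); [exact: block_sum0 | exact: block_sumD |].
move=> w /hs [B [hB hR] hw]; have [ts [-> hts]] := act_block_decomposition a hB hw.
exists [seq act t w | t <- ts]; rewrite big_map; split=> // _ /mapP [t /hts [C [hC hBC] hCt] ->].
by exists C => //; split=> //; apply: Rup hR hC hBC.
Qed.

Lemma block_sum_HC_D R : HC_sub_D G sim act R (block_sum R).
Proof.
split=> [v [s [hs ->]]|B hB [v [hv hnz hBv]]].
  exists s; split=> [w hw|]; last by rewrite /zero_set subrr.
  by have [B [hB hR] hBw] := hs w hw; split; [exact: block_sum_block hBw | exists B].
exact: (in_block_torsion_class Hact HZ hB hBv hnz (block_sum_torsion hv)).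
Qed.

Lemma HC_Delta_decomposition (HV : HC G sim act) v :
  exists n (Ds : 'I_n -> iset (iset (iset A))) (ws : 'I_n -> V),
    [/\ forall i, is_R_class G sim (Delta G sim) (Ds i), forall i j, Ds i = Ds j -> i = j,
        forall i, block_sum (Ds i) (ws i) & v = \sum_(i < n) ws i].
Proof.
have [s [hs /eqP]] := HV v I; rewrite subr_eq0 => /eqP ->.
pose P D w := is_R_class G sim (Delta G sim) D /\ block_sum D w.
have PD D u w : P D u -> P D w -> P D (u + w).
  by move=> [hD hu] [_ hw]; split=> //; apply: block_sumD.
have [|n [Ds [ws [inj hP ->]]]] := sum_group_by_key PD (s := s).
  move=> w /hs [_ [B [hB hBw]]]; exists (class_of (Delta G sim) B); split.
    exact: class_of_R_class.
  by apply: (block_sum_block hB _ hBw); split=> //; apply: Delta_refl.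
by exists n, Ds, ws; split=> // i; case: (hP i).
Qed.

Lemma block_sum_independent n (Ds : 'I_n -> iset (iset (iset A))) (ws : 'I_n -> V) :
  (forall i, is_R_class G sim (Delta G sim) (Ds i)) -> (forall i j, Ds i = Ds j -> i = j) ->
  (forall i, block_sum (Ds i) (ws i)) -> \sum_(i < n) ws i = 0 -> forall i, ws i = 0.
Proof.
move=> hD inj hws hsum i.
pose others C := exists2 j, j != i & Ds j C.
have hi : ws i = - \sum_(j < n | j != i) ws j.
  by move: hsum; rewrite (bigD1 i) //= => /eqP; rewrite addr_eq0 => /eqP.
have hothers : block_sum others (ws i).
  rewrite hi -scaleN1r; apply: block_sumZ; apply: (big_ind (block_sum others)) => [|x y|j hj].
  - exact: block_sum0.
  - exact: block_sumD.
  - by apply: block_sumS (hws j) => C; exists j.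
apply: (torsion_disjoint Hact HZ _ (block_sum_torsion (hws i)) (block_sum_torsion hothers)).
move=> C _ hiC [j /eqP hji hjC]; apply: hji; apply: inj.
exact: (Delta_class_eq (hD j) (hD i) hjC hiC).
Qed.

Lemma HC_nonzero_block_vector (HV : HC G sim act) (v : V) : v <> 0 ->
  exists w B, [/\ cls B, in_block G act zero B w & w <> 0].
Proof.
move=> hv; have [s [hs /eqP]] := HV v I; rewrite subr_eq0 => /eqP ev.
apply: NNPP => none; apply: hv; rewrite ev; apply: big1_seq => w /andP [_ hw].
apply: NNPP => hnz; apply: none; have [_ [B [hB hBw]]] := hs w hw.
by exists w, B.
Qed.

Lemma simple_HC_prec (hsimple : simple_in act (HC_sub G sim act)) C u C' u' :
  cls C -> in_block G act zero C u -> u <> 0 ->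
  cls C' -> in_block G act zero C' u' -> u' <> 0 -> prec G sim C C'.
Proof.
move=> hC hCu hu hC' hC'u' hu'; have [_ _ hmin] := hsimple.
pose Au w := exists a, w = act a u.
have subAu : is_submodule act Au.
  split=> [|c _ _ [a ->] [b ->]|a _ [b ->]]; first by exists 0; rewrite (act0l Hact).
    by exists (c *: a + b); case: Hact => _ h _ _; rewrite h.
  by exists (a * b); rewrite (actM Hact).
have HCAu : HC_sub G sim act Au.
  move=> _ [a ->]; have [ts [-> hts]] := act_block_decomposition a hC hCu.
  exists [seq act t u | t <- ts]; rewrite big_map; split; last by rewrite /zero_set subrr.
  by move=> _ /mapP [t /hts [D [hD _] hDt] ->]; split; [exists t | exists D].
case: (hmin Au subAu HCAu) => [Au0|Aufull].
  by case: hu; apply: Au0; exists 1; rewrite (act1 Hact).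
have [a ea] := Aufull u'; rewrite ea in hC'u' hu'.
exact: (in_block_torsion_class Hact HZ hC' hC'u' hu' (act_block_torsion a hC hCu)).
Qed.

Lemma simple_HC_Nabla_class : simple_in act (HC_sub G sim act) ->
  exists D, is_R_class G sim (Nabla G sim) D /\ simple_in act (HC_sub_D G sim act D).
Proof.
move=> hsimple; have [hV [v hv] hmin] := hsimple.
have [w0 [B0 [hB0 hB0w0 hw0]]] := HC_nonzero_block_vector hV hv.
exists (class_of (Nabla G sim) B0); split; first exact: class_of_R_class.
split=> [|//|W hW [hWb _]]; last exact: hmin.
  split=> // C hC [u [_ hu hCu]]; split=> //; split.
    exact: (simple_HC_prec hsimple hC hCu hu hB0 hB0w0 hw0).
  exact: (simple_HC_prec hsimple hB0 hB0w0 hw0 hC hCu hu).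
by exists v.
Qed.

Lemma simple_HC_D_simple D : simple_in act (HC_sub_D G sim act D) ->
  simple_in act (HC_sub G sim act).
Proof.
move=> [[hV hsupp] hv hmin]; split=> // W hW hWb; apply: hmin => //.
by split=> // B hB [x [hx hxnz hBx]]; apply: hsupp hB _; exists x.
Qed.

Lemma simple_HC_D_unique D D' :
  is_R_class G sim (Nabla G sim) D -> is_R_class G sim (Nabla G sim) D' ->
  simple_in act (HC_sub_D G sim act D) -> simple_in act (HC_sub_D G sim act D') -> D = D'.
Proof.
move=> hD hD' [[hV hsupp] [v hv] _] [[_ hsupp'] _ _].
have [w [B [hB hBw hw]]] := HC_nonzero_block_vector hV hv.
have suppB : in_supp G act (@full_set V) zero B by exists w.
exact: (R_class_eq Nabla_sym Nabla_trans hD hD' (hsupp B hB suppB) (hsupp' B hB suppB)).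
Qed.

End Blocks.

Section Hom.
Variables (V V' : lmodType k) (act : A -> V -> V) (act' : A -> V' -> V') (f : V -> V').
Hypothesis Hf : is_Ahom act act' f.
HB.instance Definition _ := GRing.isLinear.Build k V V' _ f (proj1 Hf).

Lemma Ahom_in_block B w : in_block G act (@zero_set k V) B w ->
  in_block G act' (@zero_set k V') B (f w).
Proof.
move=> [l [hl kl]]; exists l; split=> // x /kl hx.
by rewrite /zero_set -(proj2 Hf) hx linear0.
Qed.

Lemma Ahom_disjoint_supports D D' : HC_D G sim act D -> HC_D G sim act' D' ->
  (forall B, cls B -> D B -> D' B -> False) -> forall v, f v = 0.
Proof.
move=> [hV hsD] [_ hsD'] dis v.
have [s [hs /eqP]] := hV v I; rewrite subr_eq0 => /eqP ->.
rewrite raddf_sum; apply: big1_seq => w /andP [_ /hs [_ [B [hB hBw]]]].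
apply: NNPP => hfw; apply: (dis B hB).
  by apply: hsD hB _; exists w; split=> // w0; apply: hfw; rewrite w0 raddf0.
by apply: hsD' hB _; exists (f w); split=> //; apply: Ahom_in_block.
Qed.

End Hom.

End HarishChandraBlocks.

Theorem mainTheorem1 (k : fieldType) (A : algType k) (G : {pred A})
  (HG : GRing.subalg_closed G)
  (sim : iset A -> iset A -> Prop) (Hsim : equiv_on_cfs G sim)
  (HCb : HC_block_subalgebra G sim) :
  (* (i), first part: decomposition over Delta-classes *)
  (forall (V : lmodType k) (act : A -> V -> V),
     is_Amodule act -> HC G sim act ->
     exists Wf : iset (iset (iset A)) -> iset V,
       [/\ (forall D, is_R_class G sim (Delta G sim) D ->
              is_submodule act (Wf D) /\ HC_sub_D G sim act D (Wf D)),
           (forall v : V, exists (n : nat) (Ds : 'I_n -> iset (iset (iset A)))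
                (ws : 'I_n -> V),
              [/\ (forall i, is_R_class G sim (Delta G sim) (Ds i)),
                  (forall i j, Ds i = Ds j -> i = j),
                  (forall i, Wf (Ds i) (ws i))
                & v = \sum_(i < n) ws i])
         & (forall (n : nat) (Ds : 'I_n -> iset (iset (iset A))) (ws : 'I_n -> V),
              (forall i, is_R_class G sim (Delta G sim) (Ds i)) ->
              (forall i j, Ds i = Ds j -> i = j) ->
              (forall i, Wf (Ds i) (ws i)) ->
              \sum_(i < n) ws i = 0 -> forall i, ws i = 0)]) /\
  (* (i), second part: no nonzero maps between different Delta-blocks *)
  (forall D D' : iset (iset (iset A)),
     is_R_class G sim (Delta G sim) D -> is_R_class G sim (Delta G sim) D' -> D <> D' ->
     forall (V V' : lmodType k) (act : A -> V -> V) (act' : A -> V' -> V'),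
       is_Amodule act -> is_Amodule act' ->
       HC_D G sim act D -> HC_D G sim act' D' ->
       forall f : V -> V', is_Ahom act act' f -> forall v, f v = 0) /\
  (* (ii): Irr(A;Gamma,~) is the disjoint union of the Irr(A;Gamma,~;D),
     D ranging over Nabla-classes *)
  [/\ (forall (V : lmodType k) (act : A -> V -> V), is_Amodule act ->
         simple_in act (HC_sub G sim act) ->
         exists D, is_R_class G sim (Nabla G sim) D /\
                   simple_in act (HC_sub_D G sim act D)),
      (forall (D : iset (iset (iset A))) (V : lmodType k) (act : A -> V -> V),
         is_R_class G sim (Nabla G sim) D -> is_Amodule act ->
         simple_in act (HC_sub_D G sim act D) -> simple_in act (HC_sub G sim act))
    & (forall (D D' : iset (iset (iset A))) (V : lmodType k) (act : A -> V -> V),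
         is_R_class G sim (Nabla G sim) D -> is_R_class G sim (Nabla G sim) D' ->
         is_Amodule act ->
         simple_in act (HC_sub_D G sim act D) -> simple_in act (HC_sub_D G sim act D') ->
         D = D')].
Proof.
split; [|split].
- move=> V act Hact HV; exists (block_sum G sim act); split.
  + move=> D hD; split; last exact: block_sum_HC_D.
    apply: (block_sum_submodule HG Hsim HCb Hact) => B C.
    exact: Delta_class_prec_closed.
  + exact: HC_Delta_decomposition.
  + exact: (block_sum_independent HG Hsim Hact).
- move=> D D' hD hD' hne V V' act act' _ _ HV HV' f Hf.
  apply: (Ahom_disjoint_supports Hf HV HV') => B _ hDB hD'B.
  exact: hne (Delta_class_eq hD hD' hDB hD'B).
- split=> [V act Hact|D V act _ _|D D' V act hD hD' _].
  + exact: (simple_HC_Nabla_class HG Hsim HCb Hact).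
  + exact: simple_HC_D_simple.
  + exact: simple_HC_D_unique.
Qed.
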